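(* Let $\mathcal{P}$ be a program and $G$ a goal of Prolog$^{\oplus,\&}$, as defined in the context. Then $\mathrm{exec}(\mathcal{P},G)$ holds (execution of $\langle \mathcal{P}, G\rangle$ terminates with a success) if and only if $G$ is provable from $!\mathcal{P}$ in Lolli, that is, in intuitionistic linear logic: the sequent $!\mathcal{P} \vdash G$ is derivable.
   Context: Prolog$^{\oplus,\&}$ is a first-order language whose goal formulas $G$ and clauses $D$ are given by $G ::= A \mid G\otimes G \mid \exists x\, G \mid G \& G \mid G \oplus G$ and $D ::= A \mid G \supset A \mid \forall x\, D$, where $A$ ranges over atomic formulas. A program $\mathcal{P}$ is a set of clauses. Inside linear logic (Lolli), $\otimes$ is multiplicative conjunction, $\&$ additive conjunction, and $\oplus$ additive disjunction. The symbol $\supset$ is Lolli's intuitionistic implication, i.e. $G \supset A$ stands for $!G \multimap A$. Finally, $!\mathcal{P}$ denotes $\{!D : D\in\mathcal{P}\}$, so every clause is treated as a reusable resource. Notation: $D;\mathcal{P}$ denotes $\{D\}\cup\mathcal{P}$ with $D$ marked as the distinguished clause used for backchaining. $[t/x]$ denotes substitution of a term $t$ for $x$. The standard relation $\mathrm{prov}$ is defined inductively by: (1) $\mathrm{prov}(A;\mathcal{P},A)$; (2) $\mathrm{prov}((G_1\supset A);\mathcal{P},A)$ if $\mathrm{prov}(\mathcal{P},G_1)$; (3) $\mathrm{prov}(\forall x D;\mathcal{P},A)$ if $\mathrm{prov}([t/x]D;\mathcal{P},A)$ for some term $t$; (4) $\mathrm{prov}(\mathcal{P},A)$ if $D\in\mathcal{P}$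 and $\mathrm{prov}(D;\mathcal{P},A)$; (5) $\mathrm{prov}(\mathcal{P},G_1\otimes G_2)$ if $\mathrm{prov}(\mathcal{P},G_1)$ and $\mathrm{prov}(\mathcal{P},G_2)$; (6) $\mathrm{prov}(\mathcal{P},G_1\& G_2)$ if $\mathrm{prov}(\mathcal{P},G_1)$ and $\mathrm{prov}(\mathcal{P},G_2)$; (7) $\mathrm{prov}(\mathcal{P},G_1\oplus G_2)$ if $\mathrm{prov}(\mathcal{P},G_1)$ or $\mathrm{prov}(\mathcal{P},G_2)$; (8) $\mathrm{prov}(\mathcal{P},\exists x G_1)$ if $\mathrm{prov}(\mathcal{P},[t/x]G_1)$ for some term $t$. The new interactive execution relation $\mathrm{exec}$ is defined by the same clauses (1)–(5) and (8), with $\mathrm{exec}$ in place of $\mathrm{prov}$, together with two further rules: (a) $\mathrm{exec}(\mathcal{P},G_0\& G_1)$ if $\mathrm{exec}(\mathcal{P},G_i)$ and $\mathrm{prov}(\mathcal{P},G_{(i+1)\bmod 2})$, where the index $i\in\{0,1\}$ is chosen by the user. The result is claimed whatever choices the user makes. (b) $\mathrm{exec}(\mathcal{P},G_0\oplus G_1)$ if $\mathrm{exec}(\mathcal{P},G_i)$ for some $i\in\{0,1\}$ chosen by the machine. *)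

From Stdlib Require Import List Arith Permutation.
Import ListNotations.

(** * First-order syntax (locally nameless: bound variables are de Bruijn
    indices [BVar], free variables / parameters are [FVar]). *)
Inductive term : Type :=
| BVar : nat -> term
| FVar : nat -> term
| Fn   : nat -> list term -> term.

Fixpoint topen (k : nat) (u : term) (t : term) : term :=
  match t with
  | BVar n => if Nat.eqb n k then u else BVar n
  | FVar n => FVar n
  | Fn f l => Fn f (map (topen k u) l)
  end.

Fixpoint tfv (t : term) : list nat :=
  match t with
  | BVar _ => []
  | FVar n => [n]
  | Fn _ l => flat_map tfv l
  end.

Fixpoint tlc_at (k : nat) (t : term) : bool :=
  match t with
  | BVar n => Nat.ltb n k
  | FVar _ => true
  | Fn _ l => forallb (tlc_at k) l
  end.

Definition tlc (t : term) : Prop := tlc_at 0 t = true.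

Definition atom_open k u (l : list term) := map (topen k u) l.
Definition atom_fv (l : list term) := flat_map tfv l.
Definition atom_lc_at k (l : list term) := forallb (tlc_at k) l.

Inductive goal : Type :=
| GAtom   : nat -> list term -> goal
| GTensor : goal -> goal -> goal
| GEx     : goal -> goal
| GWith   : goal -> goal -> goal
| GPlus   : goal -> goal -> goal.

Inductive clause : Type :=
| DAtom : nat -> list term -> clause
| DImp  : goal -> nat -> list term -> clause
| DAll  : clause -> clause.

Definition program := list clause.

Fixpoint gopen (k : nat) (u : term) (g : goal) : goal :=
  match g with
  | GAtom p l => GAtom p (atom_open k u l)
  | GTensor a b => GTensor (gopen k u a) (gopen k u b)
  | GEx a => GEx (gopen (S k) u a)
  | GWith a b => GWith (gopen k u a) (gopen k u b)
  | GPlus a b => GPlus (gopen k u a) (gopen k u b)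
  end.

Fixpoint dopen (k : nat) (u : term) (d : clause) : clause :=
  match d with
  | DAtom p l => DAtom p (atom_open k u l)
  | DImp g p l => DImp (gopen k u g) p (atom_open k u l)
  | DAll d' => DAll (dopen (S k) u d')
  end.

Fixpoint goal_lc_at (k : nat) (g : goal) : bool :=
  match g with
  | GAtom _ l => atom_lc_at k l
  | GTensor a b | GWith a b | GPlus a b => goal_lc_at k a && goal_lc_at k b
  | GEx a => goal_lc_at (S k) a
  end.

Fixpoint clause_lc_at (k : nat) (d : clause) : bool :=
  match d with
  | DAtom _ l => atom_lc_at k l
  | DImp g _ l => goal_lc_at k g && atom_lc_at k l
  | DAll d' => clause_lc_at (S k) d'
  end.

Definition goal_lc (g : goal) : Prop := goal_lc_at 0 g = true.
Definition program_lc (P : program) : Prop :=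
  forall D, In D P -> clause_lc_at 0 D = true.

(** * The standard relation prov.
    [provD P D p l] is prov(D;P, A) with A = p(l): D is the distinguished
    clause used for backchaining (always a member of P, by rule (4)). *)
Inductive prov : program -> goal -> Prop :=
| prov_atom : forall P D p l,
    In D P -> provD P D p l -> prov P (GAtom p l)
| prov_tensor : forall P g1 g2,
    prov P g1 -> prov P g2 -> prov P (GTensor g1 g2)
| prov_with : forall P g1 g2,
    prov P g1 -> prov P g2 -> prov P (GWith g1 g2)
| prov_plus_l : forall P g1 g2,
    prov P g1 -> prov P (GPlus g1 g2)
| prov_plus_r : forall P g1 g2,
    prov P g2 -> prov P (GPlus g1 g2)
| prov_ex : forall P g t,
    tlc t -> prov P (gopen 0 t g) -> prov P (GEx g)
with provD : program -> clause -> nat -> list term -> Prop :=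
| provD_atom : forall P p l, provD P (DAtom p l) p l
| provD_imp : forall P g p l,
    prov P g -> provD P (DImp g p l) p l
| provD_all : forall P D p l t,
    tlc t -> provD P (dopen 0 t D) p l -> provD P (DAll D) p l.

(** The user's choice at an additive conjunction G0 & G1 is given by a
    strategy [uc]: [uc P G0 G1 = false] means i = 0, [true] means i = 1.
    The machine's choice at G0 (+) G1 is existential. *)
Definition user_choice := program -> goal -> goal -> bool.

Inductive exec (uc : user_choice) : program -> goal -> Prop :=
| exec_atom : forall P D p l,
    In D P -> execD uc P D p l -> exec uc P (GAtom p l)
| exec_tensor : forall P g1 g2,
    exec uc P g1 -> exec uc P g2 -> exec uc P (GTensor g1 g2)
| exec_with0 : forall P g0 g1,
    uc P g0 g1 = false -> exec uc P g0 -> prov P g1 ->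
    exec uc P (GWith g0 g1)
| exec_with1 : forall P g0 g1,
    uc P g0 g1 = true -> exec uc P g1 -> prov P g0 ->
    exec uc P (GWith g0 g1)
| exec_plus_l : forall P g0 g1,
    exec uc P g0 -> exec uc P (GPlus g0 g1)
| exec_plus_r : forall P g0 g1,
    exec uc P g1 -> exec uc P (GPlus g0 g1)
| exec_ex : forall P g t,
    tlc t -> exec uc P (gopen 0 t g) -> exec uc P (GEx g)
with execD (uc : user_choice) : program -> clause -> nat -> list term -> Prop :=
| execD_atom : forall P p l, execD uc P (DAtom p l) p l
| execD_imp : forall P g p l,
    exec uc P g -> execD uc P (DImp g p l) p l
| execD_all : forall P D p l t,
    tlc t -> execD uc P (dopen 0 t D) p l -> execD uc P (DAll D) p l.

Inductive form : Type :=
| Atom   : nat -> list term -> form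
| One    : form
| Top    : form
| Zero   : form
| Tensor : form -> form -> form
| With   : form -> form -> form
| Plus   : form -> form -> form
| Lolli  : form -> form -> form
| Bang   : form -> form
| All    : form -> form
| Ex     : form -> form.

Fixpoint fopen (k : nat) (u : term) (A : form) : form :=
  match A with
  | Atom p l => Atom p (atom_open k u l)
  | One => One | Top => Top | Zero => Zero
  | Tensor a b => Tensor (fopen k u a) (fopen k u b)
  | With a b => With (fopen k u a) (fopen k u b)
  | Plus a b => Plus (fopen k u a) (fopen k u b)
  | Lolli a b => Lolli (fopen k u a) (fopen k u b)
  | Bang a => Bang (fopen k u a)
  | All a => All (fopen (S k) u a)
  | Ex a => Ex (fopen (S k) u a)
  end.

Fixpoint ffv (A : form) : list nat :=
  match A with
  | Atom _ l => atom_fv l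
  | One | Top | Zero => []
  | Tensor a b | With a b | Plus a b | Lolli a b => ffv a ++ ffv b
  | Bang a | All a | Ex a => ffv a
  end.

Definition ctx_fv (G : list form) : list nat := flat_map ffv G.

(* Cut-free sequent calculus for first-order ILL; sequents  Gamma |- C
   with Gamma a multiset (list modulo exchange). *)
Inductive ill : list form -> form -> Prop :=
| ill_id : forall A, ill [A] A
| ill_ex : forall G G' C, Permutation G G' -> ill G C -> ill G' C
| ill_weak : forall G A C, ill G C -> ill (Bang A :: G) C
| ill_contr : forall G A C, ill (Bang A :: Bang A :: G) C -> ill (Bang A :: G) C
| ill_der : forall G A C, ill (A :: G) C -> ill (Bang A :: G) C
| ill_prom : forall D A, ill (map Bang D) A -> ill (map Bang D) (Bang A)
| ill_oneR : ill [] One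
| ill_oneL : forall G C, ill G C -> ill (One :: G) C
| ill_topR : forall G, ill G Top
| ill_zeroL : forall G C, ill (Zero :: G) C
| ill_tensorR : forall G D A B, ill G A -> ill D B -> ill (G ++ D) (Tensor A B)
| ill_tensorL : forall G A B C, ill (A :: B :: G) C -> ill (Tensor A B :: G) C
| ill_lolliR : forall G A B, ill (A :: G) B -> ill G (Lolli A B)
| ill_lolliL : forall G D A B C,
    ill G A -> ill (B :: D) C -> ill (Lolli A B :: G ++ D) C
| ill_withR : forall G A B, ill G A -> ill G B -> ill G (With A B)
| ill_withL1 : forall G A B C, ill (A :: G) C -> ill (With A B :: G) C
| ill_withL2 : forall G A B C, ill (B :: G) C -> ill (With A B :: G) C
| ill_plusR1 : forall G A B, ill G A -> ill G (Plus A B)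
| ill_plusR2 : forall G A B, ill G B -> ill G (Plus A B)
| ill_plusL : forall G A B C,
    ill (A :: G) C -> ill (B :: G) C -> ill (Plus A B :: G) C
| ill_allR : forall G A x,
    ~ In x (ctx_fv G ++ ffv A) -> ill G (fopen 0 (FVar x) A) -> ill G (All A)
| ill_allL : forall G A C t,
    tlc t -> ill (fopen 0 t A :: G) C -> ill (All A :: G) C
| ill_exR : forall G A t, tlc t -> ill G (fopen 0 t A) -> ill G (Ex A)
| ill_exL : forall G A C x,
    ~ In x (ctx_fv G ++ ffv A ++ ffv C) ->
    ill (fopen 0 (FVar x) A :: G) C -> ill (Ex A :: G) C.

Fixpoint gform (g : goal) : form :=
  match g with
  | GAtom p l => Atom p l
  | GTensor a b => Tensor (gform a) (gform b)
  | GEx a => Ex (gform a)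
  | GWith a b => With (gform a) (gform b)
  | GPlus a b => Plus (gform a) (gform b)
  end.

Fixpoint dform (d : clause) : form :=
  match d with
  | DAtom p l => Atom p l
  | DImp g p l => Lolli (Bang (gform g)) (Atom p l)
  | DAll d' => All (dform d')
  end.

Definition bang_program (P : program) : list form :=
  map (fun D => Bang (dform D)) P.

(* exec and prov differ only at [&], where exec proves one conjunct by exec and
   the other by prov; since exec implies prov and prov implies exec for any
   user strategy, the two relations coincide.  Every prov derivation is
   replayed in Lolli by dereliction/contraction on the banged program.
   Conversely, cut-free Lolli proofs are sound for the model in which an atom
   is true iff prov proves it: goals and clauses lie in fragments whose right
   and left rules are valid for truth in this model, and every clause of the
   program is true there. *)
From Stdlib Require Import List Permutation Bool Lia Wf_nat.
Import ListNotations.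

Scheme prov_mut := Induction for prov Sort Prop
with provD_mut := Induction for provD Sort Prop.
Scheme exec_mut := Induction for exec Sort Prop
with execD_mut := Induction for execD Sort Prop.

Lemma exec_prov uc P g : exec uc P g -> prov P g.
Proof.
  revert P g.
  apply (exec_mut uc (fun P g _ => prov P g) (fun P D p l _ => provD P D p l));
    intros; try (econstructor; eauto; fail).
Qed.

Lemma prov_exec uc P g : prov P g -> exec uc P g.
Proof.
  revert P g.
  apply (prov_mut (fun P g _ => exec uc P g) (fun P D p l _ => execD uc P D p l));
    intros; try (econstructor; eauto; fail).
  destruct (uc P g1 g2) eqn:Hchoice.
  - apply exec_with1; auto.
  - apply exec_with0; auto.
Qed.

Lemma gform_gopen g : forall k u, gform (gopen k u g) = fopen k u (gform g).
Proof. induction g; intros; simpl; f_equal; auto. Qed.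

Lemma dform_dopen d : forall k u, dform (dopen k u d) = fopen k u (dform d).
Proof. induction d; intros; simpl; rewrite ?gform_gopen, ?IHd; auto. Qed.

Lemma bang_program_map P : bang_program P = map Bang (map dform P).
Proof. unfold bang_program. now rewrite map_map. Qed.

Lemma ill_weaken_bangs X G C : ill G C -> ill (map Bang X ++ G) C.
Proof. induction X; intros; simpl; auto using ill_weak. Qed.

Lemma ill_contract_bangs X : forall G C,
  ill (map Bang X ++ map Bang X ++ G) C -> ill (map Bang X ++ G) C.
Proof.
  induction X as [|A X IH]; intros G C H; simpl in *; auto.
  assert (HA : ill (Bang A :: Bang A :: map Bang X ++ map Bang X ++ G) C).
  { eapply ill_ex; [|exact H]. apply perm_skip. symmetry. apply Permutation_middle. }
  apply ill_contr in HA.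
  assert (HX : ill (map Bang X ++ map Bang X ++ Bang A :: G) C).
  { eapply ill_ex; [|exact HA]. rewrite !app_assoc. apply Permutation_middle. }
  apply IH in HX. eapply ill_ex; [|exact HX]. symmetry. apply Permutation_middle.
Qed.

Lemma ill_id_bangs X A : ill (A :: map Bang X) A.
Proof.
  apply ill_ex with (map Bang X ++ [A]).
  - symmetry. apply Permutation_cons_append.
  - apply ill_weaken_bangs, ill_id.
Qed.

Lemma ill_tensorR_bangs X A B :
  ill (map Bang X) A -> ill (map Bang X) B -> ill (map Bang X) (Tensor A B).
Proof.
  intros HA HB. rewrite <- (app_nil_r (map Bang X)).
  apply ill_contract_bangs. rewrite app_nil_r. now apply ill_tensorR.
Qed.

Lemma ill_use_bang G A C : In (Bang A) G -> ill (A :: G) C -> ill G C.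
Proof.
  intros HA H. apply in_split in HA as [G1 [G2 ->]].
  eapply ill_ex; [apply Permutation_middle|].
  apply ill_contr, ill_der.
  eapply ill_ex; [|exact H]. apply perm_skip. symmetry. apply Permutation_middle.
Qed.

Lemma prov_ill P g : prov P g -> ill (bang_program P) (gform g).
Proof.
  revert P g.
  apply (prov_mut (fun P g _ => ill (bang_program P) (gform g))
                  (fun P D p l _ => ill (dform D :: bang_program P) (Atom p l)));
    intros; simpl; rewrite ?bang_program_map in *.
  - apply ill_use_bang with (dform D); auto.
    apply in_map, in_map; assumption.
  - now apply ill_tensorR_bangs.
  - now apply ill_withR.
  - now apply ill_plusR1.
  - now apply ill_plusR2.
  - apply ill_exR with t; auto. now rewrite <- gform_gopen.
  - apply ill_id_bangs.
  - rewrite <- (app_nil_r (map Bang _)).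
    apply ill_lolliL; [now apply ill_prom | apply ill_id].
  - apply ill_allL with t; auto. now rewrite <- dform_dopen.
Qed.

(* [All] on the right and [Ex] on the left are excluded because their
   eigenvariable rules are not valid for truth in a fixed model.  Cut-freeness keeps every sequent of a proof
   of [!P |- G] inside these fragments. *)
Fixpoint goal_like (A : form) : bool :=
  match A with
  | Atom _ _ | One | Top | Zero => true
  | Tensor a b | With a b | Plus a b => goal_like a && goal_like b
  | Lolli _ _ | All _ => false
  | Bang a | Ex a => goal_like a
  end.

Fixpoint clause_like (A : form) : bool :=
  match A with
  | Atom _ _ | One | Top | Zero => true
  | Tensor a b | With a b | Plus a b => clause_like a && clause_like b
  | Lolli a b => goal_like a && clause_like b
  | Bang a | All a => clause_like a
  | Ex _ => false
  end.

Lemma goal_like_fopen A : forall k u, goal_like (fopen k u A) = goal_like A.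
Proof. induction A; intros; simpl; rewrite ?IHA1, ?IHA2, ?IHA; auto. Qed.

Lemma clause_like_fopen A : forall k u, clause_like (fopen k u A) = clause_like A.
Proof.
  induction A; intros; simpl; rewrite ?IHA1, ?IHA2, ?IHA, ?goal_like_fopen; auto.
Qed.

Lemma goal_like_gform g : goal_like (gform g) = true.
Proof. induction g; simpl; rewrite ?IHg1, ?IHg2, ?IHg; auto. Qed.

Lemma clause_like_dform d : clause_like (dform d) = true.
Proof. induction d; simpl; rewrite ?goal_like_gform; auto. Qed.

Fixpoint fsize (A : form) : nat :=
  match A with
  | Atom _ _ | One | Top | Zero => 1
  | Tensor a b | With a b | Plus a b | Lolli a b => S (fsize a + fsize b)
  | Bang a | All a | Ex a => S (fsize a)
  end.

Lemma fsize_fopen A : forall k u, fsize (fopen k u A) = fsize A.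
Proof. induction A; intros; simpl; auto. Qed.

Section Model.
Variable P : program.

(* Opening a quantifier is not a structural descent, so truth is defined with
   fuel; any fuel [>= fsize A] gives the same answer. *)
Fixpoint truef (n : nat) (A : form) : Prop :=
  match n with
  | 0 => True
  | S n =>
    match A with
    | Atom p l => prov P (GAtom p l)
    | One | Top => True
    | Zero => False
    | Tensor a b | With a b => truef n a /\ truef n b
    | Plus a b => truef n a \/ truef n b
    | Lolli a b => truef n a -> truef n b
    | Bang a => truef n a
    | All a => forall t, tlc t -> truef n (fopen 0 t a)
    | Ex a => exists t, tlc t /\ truef n (fopen 0 t a)
    end
  end.

Lemma truef_fuel n : forall A m, fsize A <= n -> fsize A <= m ->
  (truef n A <-> truef m A).
Proof.
  induction n as [|n IH]; intros A m Hn Hm; [destruct A; simpl in Hn; lia|].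
  destruct m as [|m]; [destruct A; simpl in Hm; lia|].
  destruct A; simpl in *; try tauto;
    try (rewrite (IH A1 m), (IH A2 m) by lia; tauto);
    try (rewrite (IH A m) by lia; tauto).
  - split; intros H t Ht; specialize (H t Ht);
      [rewrite <- (IH _ m) | rewrite (IH _ m)]; rewrite ?fsize_fopen; auto; lia.
  - split; intros [t [Ht H]]; exists t; split; auto;
      [rewrite <- (IH _ m) | rewrite (IH _ m)]; rewrite ?fsize_fopen; auto; lia.
Qed.

Definition true_in (A : form) : Prop := truef (fsize A) A.

Lemma true_in_truef n A : fsize A <= n -> true_in A <-> truef n A.
Proof. intro Hn. apply truef_fuel; lia. Qed.

Ltac unfold_true_in :=
  unfold true_in; simpl;
  repeat rewrite <- (true_in_truef (_ + _)) by lia.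

Lemma true_in_tensor a b : true_in (Tensor a b) <-> true_in a /\ true_in b.
Proof. unfold_true_in. tauto. Qed.

Lemma true_in_with a b : true_in (With a b) <-> true_in a /\ true_in b.
Proof. unfold_true_in. tauto. Qed.

Lemma true_in_plus a b : true_in (Plus a b) <-> true_in a \/ true_in b.
Proof. unfold_true_in. tauto. Qed.

Lemma true_in_lolli a b : true_in (Lolli a b) <-> (true_in a -> true_in b).
Proof. unfold_true_in. tauto. Qed.

Lemma true_in_bang a : true_in (Bang a) <-> true_in a.
Proof. reflexivity. Qed.

Lemma true_in_all a : true_in (All a) <-> forall t, tlc t -> true_in (fopen 0 t a).
Proof.
  unfold true_in; simpl.
  split; intros H t Ht; specialize (H t Ht); now rewrite fsize_fopen in *.
Qed.

Lemma true_in_ex a : true_in (Ex a) <-> exists t, tlc t /\ true_in (fopen 0 t a).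
Proof.
  unfold true_in; simpl.
  split; intros [t [Ht H]]; exists t; now rewrite fsize_fopen in *.
Qed.

Definition true_hyp (F : form) : Prop := clause_like F = true /\ true_in F.

Lemma true_hyp_cons_inv F G : Forall true_hyp (F :: G) ->
  clause_like F = true /\ true_in F /\ Forall true_hyp G.
Proof. intros [[HL HT] HG]%Forall_cons_iff. auto. Qed.

Lemma ill_sound G C : ill G C ->
  Forall true_hyp G -> goal_like C = true -> true_in C.
Proof.
  induction 1; intros HG HC; simpl in HC;
    try (apply true_hyp_cons_inv in HG as [HL [HT HG]]; simpl in HL);
    repeat match goal with H : _ && _ = true |- _ => apply andb_prop in H as [? ?] end.
  - assumption.
  - apply IHill; auto. eapply Permutation_Forall; [symmetry|]; eauto.
  - auto.
  - apply IHill; auto. repeat constructor; auto.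
  - apply IHill; auto. constructor; [split|]; auto.
  - apply IHill; auto.
  - exact I.
  - auto.
  - exact I.
  - destruct HT.
  - apply Forall_app in HG as [HG HD]. rewrite true_in_tensor; auto.
  - rewrite true_in_tensor in HT. destruct HT.
    apply IHill; auto. repeat constructor; auto.
  - discriminate.
  - apply Forall_app in HG as [HG HD]. rewrite true_in_lolli in HT.
    apply IHill2; auto. constructor; [split|]; auto.
  - rewrite true_in_with; auto.
  - rewrite true_in_with in HT. apply IHill; auto. constructor; [split|]; tauto.
  - rewrite true_in_with in HT. apply IHill; auto. constructor; [split|]; tauto.
  - rewrite true_in_plus; auto.
  - rewrite true_in_plus; auto.
  - rewrite true_in_plus in HT.
    destruct HT; [apply IHill1 | apply IHill2]; auto; constructor; auto; split; auto.
  - discriminate.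
  - rewrite true_in_all in HT. apply IHill; auto.
    constructor; auto. split; auto. now rewrite clause_like_fopen.
  - rewrite true_in_ex. exists t. split; auto. apply IHill; auto.
    now rewrite goal_like_fopen.
  - discriminate.
Qed.

Fixpoint gsize (g : goal) : nat :=
  match g with
  | GAtom _ _ => 1
  | GTensor a b | GWith a b | GPlus a b => S (gsize a + gsize b)
  | GEx a => S (gsize a)
  end.

Lemma gsize_gopen g : forall k u, gsize (gopen k u g) = gsize g.
Proof. induction g; intros; simpl; auto. Qed.

Lemma true_in_gform_prov g : true_in (gform g) -> prov P g.
Proof.
  induction g as [g IH] using (induction_ltof1 _ gsize); unfold ltof in IH.
  destruct g as [p l|a b|a|a b|a b]; simpl; intro H.
  - exact H.
  - apply true_in_tensor in H as [Ha Hb].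
    constructor; apply IH; simpl; auto; lia.
  - apply true_in_ex in H as [t [Ht H]]. apply prov_ex with t; auto.
    apply IH; [rewrite gsize_gopen; simpl; lia | now rewrite gform_gopen].
  - apply true_in_with in H as [Ha Hb].
    constructor; apply IH; simpl; auto; lia.
  - apply true_in_plus in H as [Ha|Hb];
      [apply prov_plus_l | apply prov_plus_r]; apply IH; simpl; auto; lia.
Qed.

Fixpoint csize (d : clause) : nat :=
  match d with
  | DAtom _ _ | DImp _ _ _ => 1
  | DAll d => S (csize d)
  end.

Lemma csize_dopen d : forall k u, csize (dopen k u d) = csize d.
Proof. induction d; intros; simpl; auto. Qed.

Lemma true_in_dform d :
  (forall p l, provD P d p l -> prov P (GAtom p l)) -> true_in (dform d).
Proof.
  induction d as [d IH] using (induction_ltof1 _ csize); unfold ltof in IH.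
  destruct d as [p l|g p l|d]; simpl; intro Hd.
  - apply Hd. constructor.
  - rewrite true_in_lolli, true_in_bang. intro Hg.
    apply Hd. constructor. now apply true_in_gform_prov.
  - rewrite true_in_all. intros t Ht. rewrite <- dform_dopen.
    apply IH; [rewrite csize_dopen; simpl; lia|].
    intros p l Hp. apply Hd. econstructor; eauto.
Qed.

Lemma ill_prov g : ill (bang_program P) (gform g) -> prov P g.
Proof.
  intro H. apply true_in_gform_prov, (ill_sound _ _ H); [|apply goal_like_gform].
  apply Forall_map, Forall_forall. intros D HD.
  split; [apply clause_like_dform|].
  apply true_in_dform. intros p l Hp. econstructor; eauto.
Qed.

End Model.

Theorem mainTheorem1 (uc : user_choice) (P : program) (G : goal) :
  program_lc P -> goal_lc G ->
  (exec uc P G <-> ill (bang_program P) (gform G)).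
Proof.
  intros _ _. split; intro H.
  - apply prov_ill, (exec_prov uc), H.
  - apply (prov_exec uc), ill_prov, H.
Qed.
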